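(* Let $r\ge4$ be even and $n=r+2$. For $i=1,\dots,4$ let $a_i,g_i:\mathbb F_2^r\to\mathbb F_2$ and define $\mathfrak f_i:\mathbb F_2^r\times\mathbb F_2^2\to\mathbb F_2$ by $\mathfrak f_i(x,y)=a_i(x)\oplus(g_i(x)\oplus y_1)(g_i(x)\oplus y_2)$. Assume that each $a_i$ is bent with $a_1^*\oplus a_2^*\oplus a_3^*\oplus a_4^*=1$ on $\mathbb F_2^r$, and that $a_1\oplus g_1,\dots,a_4\oplus g_4$ are semi-bent functions with pairwise disjoint Walsh supports. Then each $\mathfrak f_i$ satisfies $W_{\mathfrak f_i}(w)\in\{0,\pm2^{n/2},\pm2^{(n+2)/2}\}$ for all $w\in\mathbb F_2^n$, and: (a) the sets $S^{[1]}_{\mathfrak f_i}=\{w\in\mathbb F_2^n:|W_{\mathfrak f_i}(w)|=2^{(n+2)/2}\}$, $i=1,\dots,4$, are pairwise disjoint; (b) the sets $S^{[2]}_{\mathfrak f_i}=\{w\in\mathbb F_2^n:|W_{\mathfrak f_i}(w)|=2^{n/2}\}$ are all equal to a common set $S$, and the functions $\mathfrak f^*_{[2],i}:S\to\mathbb F_2$ defined by $W_{\mathfrak f_i}(w)=2^{n/2}(-1)^{\mathfrak f^*_{[2],i}(w)}$ satisfy $\mathfrak f^*_{[2],1}\oplus\mathfrak f^*_{[2],2}\oplus\mathfrak f^*_{[2],3}\oplus\mathfrak f^*_{[2],4}=1$ on $S$.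
   Context: $W_f(\omega)=\sum_x(-1)^{f(x)\oplus\omega\cdot x}$, Walsh support $S_f=\{\omega:W_f(\omega)\ne0\}$. For even $r$, $a$ is bent if $|W_a(u)|=2^{r/2}$ for all $u$, with dual $a^*$ defined by $W_a(u)=2^{r/2}(-1)^{a^*(u)}$; $a$ is semi-bent if $W_a(u)\in\{0,\pm2^{(r+2)/2}\}$ for all $u$. *)

(* Vectors of F_2^m are boolean finite functions 'I_m -> bool;
   F_2 addition is xor (addb). *)
From HB Require Import structures.
From mathcomp Require Import all_boot all_order all_algebra.
Set Implicit Arguments. Unset Strict Implicit. Unset Printing Implicit Defensive.
Import Order.TTheory GRing.Theory Num.Theory.
Local Open Scope ring_scope.

Definition bv (m : nat) := {ffun 'I_m -> bool}.

Definition dot (m : nat) (u x : bv m) : bool := \big[addb/false]_(i < m) (u i && x i).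

Definition walsh (m : nat) (f : bv m -> bool) (w : bv m) : int :=
  \sum_(x : bv m) (-1) ^+ (f x (+) dot w x).

Definition wsupp (m : nat) (f : bv m -> bool) : {set bv m} :=
  [set w | walsh f w != 0].

Definition bent (m : nat) (f : bv m -> bool) : Prop :=
  forall u, `|walsh f u| = 2 ^+ (m./2).

Definition semibent (m : nat) (f : bv m -> bool) : Prop :=
  forall u, walsh f u \in [:: 0; 2 ^+ (m.+2)./2; - 2 ^+ (m.+2)./2].

(* sign function: if W_f(u) = c (-1)^s with c > 0, then s = sgnbit f u.
   For bent f this is the dual f^*: W_f(u) = 2^(m/2) (-1)^(f^*(u)). *)
Definition sgnbit (m : nat) (f : bv m -> bool) (u : bv m) : bool := walsh f u < 0.

(* Identification F_2^r x F_2^2 = F_2^(r+2): z = (x, y1, y2) *)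
Definition xpart (r : nat) (z : bv (r + 2)) : bv r := [ffun i : 'I_r => z (lshift 2 i)].
Definition y1 (r : nat) (z : bv (r + 2)) : bool := z (rshift r (0 : 'I_2)).
Definition y2 (r : nat) (z : bv (r + 2)) : bool := z (rshift r (1 : 'I_2)).

Definition frakf (r : nat) (a g : bv r -> bool) (z : bv (r + 2)) : bool :=
  a (xpart z) (+) ((g (xpart z) (+) y1 z) && (g (xpart z) (+) y2 z)).

From HB Require Import structures.
From mathcomp Require Import all_boot all_order all_algebra.
Import Order.TTheory GRing.Theory Num.Theory.
Local Open Scope ring_scope.

(* Write w = (u, w1, w2) with u in F_2^r.  Since (b + y1)(b + y2) is the bent
   function y1 y2 of F_2^2 translated by (b, b), summing out y gives
     W_f(w) = 2 (-1)^(w1 w2) W_a(u)   if w1 = w2,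
     W_f(w) = 2 W_(a+g)(u)            if w1 <> w2.
   Hence every f_i takes the value +-2^(n/2) exactly on the common set w1 = w2,
   with dual w1 w2 + a_i^*(u), whose four-fold sum is that of the a_i^*; and
   +-2^((n+2)/2) exactly where w1 <> w2 and u lies in the Walsh support of
   a_i + g_i, and these supports are pairwise disjoint. *)

Section SplitCoordinates.
Variable r : nat.

Definition joinbv (p : bv r * (bool * bool)) : bv (r + 2) :=
  [ffun i => match split i with
             | inl j => p.1 j
             | inr k => if k == 0 then p.2.1 else p.2.2
             end].

Definition splitbv (z : bv (r + 2)) : bv r * (bool * bool) := (xpart z, (y1 z, y2 z)).

Lemma joinbv_lshift p j : joinbv p (lshift 2 j) = p.1 j.
Proof.
rewrite ffunE; case: splitP => [j' /= Ej | k /= Ej].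
  by congr (p.1 _); apply/val_inj.
by move: (ltn_ord j); rewrite Ej ltnNge leq_addr.
Qed.

Lemma joinbv_rshift p k : joinbv p (rshift r k) = if k == 0 then p.2.1 else p.2.2.
Proof.
rewrite ffunE; case: splitP => [j /= Ek | k' /= Ek].
  by move: (ltn_ord j); rewrite -Ek ltnNge leq_addr.
by have -> : k' = k by apply/val_inj/eqP; rewrite -(eqn_add2l r) Ek.
Qed.

Lemma joinbvK : cancel joinbv splitbv.
Proof.
case=> x [b1 b2]; rewrite /splitbv /xpart /y1 /y2 !joinbv_rshift; congr (_, _).
by apply/ffunP => j; rewrite ffunE joinbv_lshift.
Qed.

Lemma splitbvK : cancel splitbv joinbv.
Proof.
move=> z; apply/ffunP => i; rewrite ffunE.
have := splitK i; case: (split i) => [j | [[|[|//]] ltk2]] /= <-.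
- by rewrite /xpart ffunE.
- by congr (z (rshift r _)); apply/val_inj.
- by congr (z (rshift r _)); apply/val_inj.
Qed.

Lemma dot_joinbv (w : bv (r + 2)) x b1 b2 :
  dot w (joinbv (x, (b1, b2))) = dot (xpart w) x (+) ((y1 w && b1) (+) (y2 w && b2)).
Proof.
rewrite /dot big_split_ord /= !big_ord_recr big_ord0 /=; congr (_ (+) (_ (+) _)).
- by apply: eq_bigr => j _; rewrite joinbv_lshift /xpart ffunE.
- by rewrite (_ : widen_ord _ _ = 0 :> 'I_2) ?joinbv_rshift //; apply/val_inj.
- by rewrite (_ : ord_max = 1 :> 'I_2) ?joinbv_rshift //; apply/val_inj.
Qed.

Lemma walsh_joinbv (f : bv (r + 2) -> bool) (w : bv (r + 2)) :
  walsh f w = \sum_(x : bv r) \sum_(b1 : bool) \sum_(b2 : bool)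
    (-1) ^+ (f (joinbv (x, (b1, b2))) (+) dot w (joinbv (x, (b1, b2)))).
Proof.
rewrite /walsh (reindex joinbv); last first.
  by apply: onW_bij; exists splitbv; [exact: joinbvK | exact: splitbvK].
under [RHS]eq_bigr => x _ do rewrite pair_big.
by rewrite pair_big; apply: eq_bigr => -[x [b1 b2]].
Qed.

Lemma frakf_joinbv (a g : bv r -> bool) x b1 b2 :
  frakf a g (joinbv (x, (b1, b2))) = a x (+) ((g x (+) b1) && (g x (+) b2)).
Proof.
rewrite /frakf -[xpart _]/(splitbv _).1 -[y1 _]/(splitbv _).2.1.
by rewrite -[y2 _]/(splitbv _).2.2 joinbvK.
Qed.

End SplitCoordinates.

Arguments joinbv {r}.

Lemma quad_sign_sum (b w1 w2 : bool) :
  \sum_(y1 : bool) \sum_(y2 : bool)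
     (-1) ^+ (((b (+) y1) && (b (+) y2)) (+) ((w1 && y1) (+) (w2 && y2))) =
  2 * (-1) ^+ ((w1 && w2) (+) ((w1 (+) w2) && b)) :> int.
Proof. by rewrite !big_bool; case: b; case: w1; case: w2. Qed.

Lemma walsh_frakf r (a g : bv r -> bool) (w : bv (r + 2)) :
  walsh (frakf a g) w =
  if y1 w == y2 w then (-1) ^+ (y1 w && y2 w) * (2 * walsh a (xpart w))
  else 2 * walsh (fun x => a x (+) g x) (xpart w).
Proof.
have sum_y (x : bv r) : \sum_(b1 : bool) \sum_(b2 : bool)
    (-1) ^+ (frakf a g (joinbv (x, (b1, b2))) (+) dot w (joinbv (x, (b1, b2)))) =
    (-1) ^+ (a x (+) dot (xpart w) x) *
    (2 * (-1) ^+ ((y1 w && y2 w) (+) ((y1 w (+) y2 w) && g x))) :> int.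
  rewrite -quad_sign_sum mulr_sumr; apply: eq_bigr => b1 _.
  rewrite mulr_sumr; apply: eq_bigr => b2 _.
  by rewrite frakf_joinbv dot_joinbv addbACA signr_addb.
rewrite walsh_joinbv (eq_bigr _ (fun x _ => sum_y x)) /walsh.
case: eqP => [Ey | /eqP Ny].
- rewrite Ey addbb /= addbF !mulr_sumr; apply: eq_bigr => x _.
  by rewrite mulrC mulrCA mulrA.
- have [-> ->] : y1 w && y2 w = false /\ y1 w (+) y2 w = true.
    by move: Ny; case: (y1 w); case: (y2 w).
  rewrite mulr_sumr; apply: eq_bigr => x _.
  by rewrite /= mulrCA -signr_addb addbAC.
Qed.

Lemma eq_pow2 (m p : nat) : ((2 : int) ^+ m == 2 ^+ p) = (m == p).
Proof. exact/inj_eq/ieexprIn. Qed.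

Lemma walsh_bent_neq0 m (f : bv m -> bool) u : bent f -> walsh f u != 0.
Proof. by move=> f_bent; rewrite -normr_eq0 f_bent expf_neq0. Qed.

Section FrakfSpectrum.
Variables (r : nat) (a g : bv r -> bool).
Let ag := fun x => a x (+) g x.
Hypothesis a_bent : bent a.
Hypothesis ag_semibent : semibent ag.

Lemma norm_walsh_frakf_diag w :
  y1 w == y2 w -> `|walsh (frakf a g) w| = 2 ^+ (r./2).+1.
Proof. by rewrite walsh_frakf => ->; rewrite normrM normr_sign mul1r normrM a_bent exprS. Qed.

Lemma walsh_frakf_offdiag w : y1 w != y2 w ->
  walsh (frakf a g) w \in [:: 0; 2 ^+ (r./2).+2; - 2 ^+ (r./2).+2].
Proof.
rewrite walsh_frakf => /negbTE ->.
by have := ag_semibent (xpart w); rewrite !inE => /or3P[] /eqP ->;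
  rewrite ?mulr0 ?mulrN -?exprS eqxx ?orbT.
Qed.

Lemma norm_walsh_frakf_top w :
  (`|walsh (frakf a g) w| == 2 ^+ (r./2).+2) = (y1 w != y2 w) && (xpart w \in wsupp ag).
Proof.
have [Ey | Ny] := boolP (y1 w == y2 w).
  by rewrite norm_walsh_frakf_diag // eq_pow2 ltn_eqF.
rewrite /= inE walsh_frakf (negbTE Ny).
have := ag_semibent (xpart w); rewrite !inE => /or3P[] /eqP ->.
- by rewrite mulr0 normr0 eq_sym; apply/negbTE/expf_neq0.
- by rewrite -exprS normrX eqxx expf_neq0.
- by rewrite mulrN -exprS normrN normrX eqxx oppr_eq0 expf_neq0.
Qed.

Lemma norm_walsh_frakf_mid w :
  (`|walsh (frakf a g) w| == 2 ^+ (r./2).+1) = (y1 w == y2 w).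
Proof.
have [Ey | Ny] := boolP (y1 w == y2 w).
  by rewrite norm_walsh_frakf_diag // eqxx.
have := walsh_frakf_offdiag _ Ny; rewrite !inE => /or3P[] /eqP ->.
- by rewrite normr0 eq_sym; apply/negbTE/expf_neq0.
- by rewrite normrX eq_pow2 gtn_eqF.
- by rewrite normrN normrX eq_pow2 gtn_eqF.
Qed.

Lemma walsh_frakf_values w : walsh (frakf a g) w \in
  [:: 0; 2 ^+ (r./2).+1; - 2 ^+ (r./2).+1; 2 ^+ (r./2).+2; - 2 ^+ (r./2).+2].
Proof.
have [Ey | Ny] := boolP (y1 w == y2 w).
  have /eqP := norm_walsh_frakf_diag _ Ey.
  by rewrite eqr_norml !inE => /andP[/orP[] -> _]; rewrite ?orbT.
by have := walsh_frakf_offdiag _ Ny; rewrite !inE => /or3P[] ->; rewrite ?orbT.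
Qed.

Lemma sgnbit_frakf_diag w :
  y1 w == y2 w -> sgnbit (frakf a g) w = (y1 w && y2 w) (+) sgnbit a (xpart w).
Proof.
rewrite /sgnbit walsh_frakf => ->.
by rewrite mulr_sign_lt0 pmulr_rlt0 // mulf_neq0 // walsh_bent_neq0.
Qed.

End FrakfSpectrum.

Theorem mainTheorem7 (r : nat) (a g : 'I_4 -> bv r -> bool) :
  (4 <= r)%N -> ~~ odd r ->
  (forall i, bent (a i)) ->
  (forall u, \big[addb/false]_(i < 4) sgnbit (a i) u = true) ->
  (forall i, semibent (fun x => a i x (+) g i x)) ->
  (forall i j, i != j ->
     [disjoint wsupp (fun x => a i x (+) g i x) & wsupp (fun x => a j x (+) g j x)]) ->
  let n := (r + 2)%N in
  let F := fun i => frakf (a i) (g i) in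
  (forall i (w : bv n), walsh (F i) w \in
     [:: 0; 2 ^+ n./2; - 2 ^+ n./2; 2 ^+ n.+2./2; - 2 ^+ n.+2./2]) /\
  (forall i j, i != j ->
     [disjoint [set w : bv n | `|walsh (F i) w| == 2 ^+ n.+2./2]
             & [set w : bv n | `|walsh (F j) w| == 2 ^+ n.+2./2]]) /\
  (exists S : {set bv n},
     (forall i, [set w : bv n | `|walsh (F i) w| == 2 ^+ n./2] = S) /\
     (forall w, w \in S -> \big[addb/false]_(i < 4) sgnbit (F i) w = true)).
Proof.
move=> _ _ a_bent duals_sum ag_semibent disjoint_supp n F; rewrite {}/n {}/F.
have -> : (r + 2)./2 = (r./2).+1 by rewrite addn2.
have -> : (r + 2).+2./2 = (r./2).+2 by rewrite addn2.
split; [|split].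
- by move=> i w; apply: walsh_frakf_values.
- move=> i j neq_ij; rewrite -setI_eq0; apply/eqP/setP => w.
  rewrite !inE !norm_walsh_frakf_top //.
  apply/negbTE/negP => /andP[/andP[_ supp_i] /andP[_ supp_j]].
  by rewrite (disjointFr (disjoint_supp i j neq_ij) supp_i) in supp_j.
- exists [set w | y1 w == y2 w]; split.
    by move=> i; apply/setP => w; rewrite !inE norm_walsh_frakf_mid.
  move=> w; rewrite inE => Ey.
  under eq_bigr => i _ do rewrite sgnbit_frakf_diag //.
  by rewrite big_split big_const_ord duals_sum; case: (_ && _).
Qed.
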